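(* Let $K$ be a subfield of $\mathbb{R}$, let $A$ be a commutative $K$-algebra (with $1$) and let $T\subseteq A$ be a preordering of $A$. Suppose that $A$ (equipped with $T$) is f.f., almost archimedean and reduced (i.e. $A$ has no nonzero nilpotent elements). Then $A$ is the directed union $A=\bigcup B$ of its finitely generated $K$-subalgebras $B$ that are almost archimedean when equipped with the preordering $T\cap B$. More precisely, every finite subset of $A$ is contained in such a subalgebra $B$, and any two such subalgebras are contained in a third one.
   Context: A preordering of a commutative ring $A$ is a subset $T\subseteq A$ with $T+T\subseteq T$, $TT\subseteq T$ and $a^2\in T$ for all $a\in A$. If $B\subseteq A$ is a subring, $B$ is equipped with the preordering $T\cap B$. An ordering of a ring $A$ is a subset $P\subseteq A$ with $P+P\subseteq P$, $PP\subseteq P$, $P\cup -P=A$ and $P\cap -P$ a prime ideal of $A$. For a ring $A$ with preordering $T$, $\operatorname{sper} A$ denotes the set of orderings $P$ of $A$ with $T\subseteq P$. An ordering $P$ is archimedean if for every $a\in A$ there is $N\in\mathbb{N}$ with $N-a\in P$. The preordered ring $A$ is called almost archimedean if every $P\in\operatorname{sper}A$ for which $P\cap -P$ is a minimal prime ideal of $A$ is archimedean. The $K$-algebra $A$ is called f.f. if $A$ has only finitely many minimal prime ideals and, for each minimal prime ideal $\mathfrak{p}$ of $A$, the quotient field $\operatorname{qf}(A/\mathfrak{p})$ is a finitely generated field extension of $K$. ''f.g.'' means finitely generated as a $K$-algebra. *)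

From HB Require Import structures.
From mathcomp Require Import all_boot all_order all_algebra.
From mathcomp Require Export reals.
Set Implicit Arguments.
Unset Strict Implicit.
Unset Printing Implicit Defensive.
Import Order.TTheory GRing.Theory Num.Theory.
Local Open Scope ring_scope.

(* Subsets of a ring are predicates A -> Prop.  All notions below are
   relative to a carrier S : A -> Prop (a subring/subalgebra of A); taking
   S := fun _ => True gives the usual notions for A itself, and taking S := B
   gives the notions for the ring B (with B's prime ideals, orderings, ...
   being subsets of B). *)

Section Defs.
Variable (K : fieldType) (A : comAlgType K).

Definition subset_of (X Y : A -> Prop) : Prop := forall x, X x -> Y x.

Definition full : A -> Prop := fun _ => True.

Definition is_subalg (S : A -> Prop) : Prop :=
  [/\ S 1, (forall x y, S x -> S y -> S (x + y)),
      (forall x y, S x -> S y -> S (x * y)) &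
      (forall (k : K) x, S x -> S (k *: x))].

Definition gen_subalg (s : seq A) : A -> Prop :=
  fun x => forall S, is_subalg S -> (forall y, y \in s -> S y) -> S x.

Definition fg_subalg (B : A -> Prop) : Prop :=
  exists s : seq A, forall x, B x <-> gen_subalg s x.

Definition ideal_in (S I : A -> Prop) : Prop :=
  [/\ subset_of I S, I 0, (forall x y, I x -> I y -> I (x + y)) &
      (forall a x, S a -> I x -> I (a * x))].

Definition prime_in (S p : A -> Prop) : Prop :=
  [/\ ideal_in S p, ~ p 1 &
      (forall x y, S x -> S y -> p (x * y) -> p x \/ p y)].

Definition minimal_prime_in (S p : A -> Prop) : Prop :=
  prime_in S p /\ (forall q, prime_in S q -> subset_of q p -> subset_of p q).

Definition preordering_in (S T : A -> Prop) : Prop :=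
  [/\ subset_of T S, (forall x y, T x -> T y -> T (x + y)),
      (forall x y, T x -> T y -> T (x * y)) &
      (forall a, S a -> T (a ^+ 2))].

Definition supp (P : A -> Prop) : A -> Prop := fun x => P x /\ P (- x).

Definition ordering_in (S P : A -> Prop) : Prop :=
  [/\ subset_of P S, (forall x y, P x -> P y -> P (x + y)),
      (forall x y, P x -> P y -> P (x * y)),
      (forall a, S a -> P a \/ P (- a)) &
      prime_in S (supp P)].

Definition archimedean_in (S P : A -> Prop) : Prop :=
  forall a, S a -> exists N : nat, P (N%:R - a).

(* The ring S equipped with the preordering T /\ S is almost archimedean:
   every P in sper S (i.e. ordering of S containing T /\ S) whose support
   is a minimal prime ideal of S is archimedean. *)
Definition almost_archimedean_in (S T : A -> Prop) : Prop :=
  forall P, ordering_in S P -> subset_of (fun x => T x /\ S x) P ->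
    minimal_prime_in S (supp P) -> archimedean_in S P.

Definition reduced : Prop := forall (x : A) (n : nat), x ^+ n = 0 -> x = 0.

(* qf(A/p) is a finitely generated field extension of K: there are finitely
   many c_1..c_n in A such that qf(A/p) = K(c_1 mod p, ..., c_n mod p); i.e.
   every element [a]/[b] (b notin p) of qf(A/p) equals [u]/[v] with
   u, v in K[c_1..c_n] and v notin p. *)
Definition qf_quot_fg (p : A -> Prop) : Prop :=
  exists c : seq A, forall a b, ~ p b ->
    exists u v, [/\ gen_subalg c u, gen_subalg c v, ~ p v &
                    p (a * v - u * b)].

(* A is f.f.: finitely many minimal primes, each with qf(A/p) f.g. over K. *)
Definition ff_alg : Prop :=
  (exists (n : nat) (ps : 'I_n -> (A -> Prop)), forall p,
      minimal_prime_in full p -> exists i : 'I_n, forall x, p x <-> ps i x) /\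
  (forall p, minimal_prime_in full p -> qf_quot_fg p).

End Defs.

From mathcomp Require Import all_boot all_algebra reals.
From mathcomp Require Import boolp classical_sets ring.
Set Implicit Arguments.
Unset Strict Implicit.
Unset Printing Implicit Defensive.
Import GRing.Theory.
Local Open Scope classical_set_scope.
Local Open Scope ring_scope.

(* Let p_1, ..., p_n be the minimal primes of A.  As A is reduced they meet
   in 0, so each p_i has an annihilator e_i outside p_i, and by f.f. finitely
   many c_i generate qf(A/p_i).  Let B be a subalgebra containing all e_i and
   c_i, and P an ordering of B containing T with minimal support q.  Then
   q = B ∩ p_i for some i, and P extends, through A/p_i in qf(B/q), to an
   ordering of A with support p_i; it contains T because e_i^2 clears the
   denominators of any t in T.  This extension is archimedean by hypothesis,
   hence so is P.  So adjoining the e_i and c_i to any finite set of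
   generators yields the required subalgebras. *)

Section Subalgebras.
Variables (K : fieldType) (A : comAlgType K).

Section SubalgClosed.
Variables (S : A -> Prop).
Hypothesis HS : is_subalg S.

Lemma subalg1 : S 1. Proof. by case: HS. Qed.
Lemma subalgD x y : S x -> S y -> S (x + y). Proof. by case: HS => _ + _ _; apply. Qed.
Lemma subalgM x y : S x -> S y -> S (x * y). Proof. by case: HS => _ _ + _; apply. Qed.
Lemma subalgZ (k : K) x : S x -> S (k *: x). Proof. by case: HS => _ _ _; apply. Qed.
Lemma subalgN x : S x -> S (- x). Proof. by move=> /(subalgZ (-1)); rewrite scaleN1r. Qed.
Lemma subalg0 : S 0. Proof. by have := subalgZ 0 subalg1; rewrite scale0r. Qed.
Lemma subalgB x y : S x -> S y -> S (x - y).
Proof. by move=> Sx Sy; apply/subalgD/subalgN. Qed.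

Lemma subalg_nat m : S m%:R.
Proof. by elim: m => [|m IHm]; [exact: subalg0 | rewrite -addn1 natrD; apply/subalgD/subalg1]. Qed.

End SubalgClosed.

Lemma full_subalg : is_subalg (@full _ A). Proof. by []. Qed.

Lemma gen_subalgP (s : seq A) : is_subalg (gen_subalg s).
Proof.
split=> [S [] // | x y Sx Sy S HS sS | x y Sx Sy S HS sS | k x Sx S HS sS].
- by apply: subalgD => //; [apply: Sx | apply: Sy].
- by apply: subalgM => //; [apply: Sx | apply: Sy].
- by apply: subalgZ => //; apply: Sx.
Qed.

Lemma gen_subalg_mem (s : seq A) y : y \in s -> gen_subalg s y.
Proof. by move=> sy S _; apply. Qed.

Lemma gen_subalg_sub (c s : seq A) :
  {subset c <= s} -> gen_subalg c `<=` gen_subalg s.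
Proof. by move=> cs x; apply; [exact: gen_subalgP | move=> y /cs; exact: gen_subalg_mem]. Qed.

End Subalgebras.

Section Primes.
Variables (K : fieldType) (A : comAlgType K).

Section FullPrime.
Variable p : A -> Prop.
Hypothesis Hp : prime_in (@full _ A) p.

Lemma prime0 : p 0. Proof. by case: Hp => -[]. Qed.
Lemma prime1 : ~ p 1. Proof. by case: Hp. Qed.
Lemma primeD x y : p x -> p y -> p (x + y). Proof. by case: Hp => -[_ _ + _] _ _; apply. Qed.
Lemma primeMl a x : p x -> p (a * x). Proof. by case: Hp => -[_ _ _ +] _ _; apply. Qed.
Lemma primeMr a x : p x -> p (x * a). Proof. by rewrite mulrC; apply: primeMl. Qed.
Lemma primeN x : p x -> p (- x). Proof. by rewrite -mulN1r; apply: primeMl. Qed.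
Lemma primeM_or x y : p (x * y) -> p x \/ p y. Proof. by case: Hp => _ _; apply. Qed.
Lemma primeM_notin x y : ~ p x -> ~ p y -> ~ p (x * y).
Proof. by move=> px py /primeM_or []. Qed.

End FullPrime.

Lemma prime_in_prod (S p : A -> Prop) (I : Type) (r : seq I) (F : I -> A) :
  is_subalg S -> prime_in S p -> (forall i, S (F i) /\ ~ p (F i)) ->
  S (\prod_(i <- r) F i) /\ ~ p (\prod_(i <- r) F i).
Proof.
move=> HS [_ p1 pM] SF; apply: (big_ind (fun x => S x /\ ~ p x)) => //.
- by split; [exact: subalg1 |].
- move=> x y [Sx px] [Sy py]; split; first exact: subalgM.
  by case/(pM _ _ Sx Sy).
Qed.

Lemma prime_in_contract (B p : A -> Prop) :
  is_subalg B -> prime_in (@full _ A) p -> prime_in B (B `&` p).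
Proof.
move=> HB Hp; split; [split|..].
- by move=> x [].
- by split; [exact: subalg0 | exact: prime0].
- by move=> x y [Bx px] [By py]; split; [exact: subalgD | exact: primeD].
- by move=> a x Ba [Bx px]; split; [exact: subalgM | exact: primeMl].
- by case=> _; apply: prime1.
- by move=> x y Bx By [_ /(primeM_or Hp) []]; [left | right].
Qed.

Definition mulset (M : set A) := M 1 /\ forall x y, M x -> M y -> M (x * y).

Definition maximal_mulset (M : set A) :=
  [/\ mulset M, ~ M 0 & forall N, mulset N -> ~ N 0 -> M `<=` N -> N `<=` M].

Lemma exists_maximal_mulset (y : A) :
  (forall k, y ^+ k != 0) -> exists2 M, maximal_mulset M & M y.
Proof.
move=> y_nnil.
(* The last clause lets the empty chain, whose union is set0, qualify. *)
pose Good (M : set A) := [/\ forall x z, M x -> M z -> M (x * z), ~ M 0 &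
  M !=set0 -> M 1 /\ M y].
have [M [[Mmul M0 Mne] Mmax]] : exists M, Good M /\ forall N, M `<` N -> ~ Good N.
  apply: Zorn_bigcup => F FG Ftot; split.
  - move=> x z [X FX Xx] [Z FZ Zz].
    have [XZ|ZX] := Ftot X Z FX FZ.
      by exists Z => //; have [+ _ _] := FG Z FZ; apply => //; apply: XZ.
    by exists X => //; have [+ _ _] := FG X FX; apply => //; apply: ZX.
  - by case=> X FX; have [_ + _] := FG X FX; apply.
  - case=> x [X FX Xx]; have [_ _ /(_ (ex_intro _ x Xx)) [X1 Xy]] := FG X FX.
    by split; exists X.
have [M1 My] : M 1 /\ M y.
  apply: Mne; apply: contrapT => M_empty.
  apply: (Mmax [set y ^+ k | k in [set: nat]]).
    split=> [z Mz | sub]; first by case: M_empty; exists z.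
    by apply: M_empty; exists 1; apply: sub; exists 0%N; rewrite ?expr0.
  split.
  - by move=> _ _ [a _ <-] [b _ <-]; exists (a + b)%N; rewrite ?exprD.
  - by case=> k _ /eqP; apply/negP.
  - by split; [exists 0%N; rewrite ?expr0 | exists 1%N; rewrite ?expr1].
exists M => //; split=> // N [N1 Nmul] N0 MN; apply: contrapT => NM.
by apply: (Mmax N) => //; split=> // _; split=> //; apply: MN.
Qed.

Section Reduced.
Hypothesis red : reduced A.

Lemma maximal_mulset_annihilator M x :
  maximal_mulset M -> ~ M x -> exists2 m, M m & m * x = 0.
Proof.
move=> [[M1 Mmul] M0 Mmax] Mx.
(* M[x] is multiplicative and strictly larger than M, so it contains 0. *)
pose Mx_pows (z : A) := exists m k, M m /\ z = m * x ^+ k.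
have [[m [[|k] [Mm e]]] | Mx_pows0] := pselect (Mx_pows 0).
- by case: M0; rewrite e expr0 mulr1.
- exists m => //; apply: (red (n := k.+1)).
  by rewrite exprMn exprSr -mulrA -e mulr0.
- exfalso; apply/Mx/(Mmax Mx_pows) => //.
  + split; first by exists 1, 0%N; rewrite mulr1.
    move=> _ _ [m1 [k1 [M1m ->]]] [m2 [k2 [M2m ->]]].
    by exists (m1 * m2), (k1 + k2)%N; rewrite exprD mulrACA; split => //; apply: Mmul.
  + by move=> z Mz; exists z, 0%N; rewrite mulr1.
  + by exists 1, 1%N; rewrite mul1r expr1.
Qed.

Lemma maximal_mulset_compl_minimal_prime M :
  maximal_mulset M -> minimal_prime_in (@full _ A) (~` M).
Proof.
move=> maxM; have [[M1 Mmul] M0 Mmax] := maxM.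
have ann := maximal_mulset_annihilator maxM.
have Mprime : prime_in (@full _ A) (~` M).
  split; [split|..] => //.
  - move=> x z /ann [m1 M1m e1] /ann [m2 M2m e2] Mxz; apply: M0.
    have -> : 0 = m1 * m2 * (x + z) by rewrite mulrDr mulrAC e1 -mulrA e2; ring.
    exact/Mmul/Mxz/Mmul.
  - move=> a x _ /ann [m Mm e] Max; apply: M0.
    have -> : 0 = m * (a * x) by rewrite mulrCA e mulr0.
    exact: Mmul.
  - move=> x z _ _ Mxz; apply: contrapT => /not_orP [/contrapT Mx /contrapT Mz].
    exact/Mxz/Mmul.
split=> // q [[_ q0 _ _] q1 qM] qM' x Mx; apply: contrapT => qx.
apply/Mx/(Mmax (~` q)) => //.
- by split=> // a b qa qb /(qM _ _ I I) [].
- by move=> z Mz /qM'.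
Qed.

Lemma reduced_cap_minimal_primes (y : A) :
  (forall p, minimal_prime_in (@full _ A) p -> p y) -> y = 0.
Proof.
move=> Hy; apply: contrapT => /eqP y0.
have y_nnil k : y ^+ k != 0 by apply: contra y0 => /eqP /red ->.
have [M Mmax My] := exists_maximal_mulset y_nnil.
exact: Hy _ (maximal_mulset_compl_minimal_prime Mmax) My.
Qed.

End Reduced.
End Primes.

Section OrderingExtension.
Variables (K : fieldType) (A : comAlgType K).

Definition has_annihilator_in (B p : A -> Prop) :=
  exists e, [/\ B e, ~ p e & forall x, p x -> x * e = 0].

(* A/p embeds in the fraction field of B/(B ∩ p). *)
Definition quot_in_qf (B p : A -> Prop) :=
  forall a, exists u v, [/\ B u, B v, ~ p v & p (a * v - u)].

Lemma has_annihilator_in_sub (B B' p : A -> Prop) :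
  B `<=` B' -> has_annihilator_in B p -> has_annihilator_in B' p.
Proof. by move=> BB' [e [Be pe ann]]; exists e; split=> //; apply: BB'. Qed.

Lemma quot_in_qf_sub (B B' p : A -> Prop) :
  B `<=` B' -> quot_in_qf B p -> quot_in_qf B' p.
Proof.
by move=> BB' qfB a; have [u [v [Bu Bv pv pau]]] := qfB a; exists u, v; split=> //; apply: BB'.
Qed.

Lemma qf_quot_fg_quot_in_qf (p : A -> Prop) :
  prime_in (@full _ A) p -> qf_quot_fg p -> exists c, quot_in_qf (gen_subalg c) p.
Proof.
move=> Hp [c qf]; exists c => a.
by have [u [v]] := qf a 1 (prime1 Hp); rewrite mulr1; exists u, v.
Qed.

Section ExtOrdering.
Variables (B p P : A -> Prop).
Hypotheses (HB : is_subalg B) (Hp : prime_in (@full _ A) p) (HP : ordering_in B P).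
Hypothesis suppP : forall x, B x -> supp P x <-> p x.

Lemma ordering_prime x : B x -> p x -> P x.
Proof. by move=> Bx /(suppP Bx) []. Qed.

Lemma ordering_sqr v : B v -> P (v * v).
Proof.
case: HP => _ _ Pmul Ptot _ Bv.
by case: (Ptot v Bv) => Pv; [| rewrite -mulrNN]; exact: Pmul.
Qed.

Lemma ordering_modp x y : B x -> B y -> p (x - y) -> P y -> P x.
Proof.
case: HP => _ Padd _ _ _ Bx By pxy Py.
rewrite -(subrK y x) addrC; apply: Padd => //.
exact: ordering_prime (subalgB HB Bx By) pxy.
Qed.

Lemma ordering_cancel x w : B x -> B w -> ~ p w -> P w -> P (x * w) -> P x.
Proof.
case: HP => _ _ Pmul Ptot _ Bx Bw pw Pw Pxw.
case: (Ptot x Bx) => // Pnx.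
have /(suppP (subalgM HB Bx Bw)) /(primeM_or Hp) [px | //] : supp P (x * w).
  by split=> //; rewrite -mulNr; exact: Pmul.
exact: ordering_prime.
Qed.

(* The ordering of qf(B/(B ∩ p)) induced by P, pulled back to A. *)
Definition ext_ordering a :=
  exists u v, [/\ B u, B v, ~ p v, p (a * v - u) & P (u * v)].

Lemma ext_ordering_restrict a : B a -> ext_ordering a -> P a.
Proof.
move=> Ba [u [v [Bu Bv pv pav Puv]]].
have Bvv := subalgM HB Bv Bv.
apply: (ordering_cancel Ba Bvv (primeM_notin Hp pv pv) (ordering_sqr Bv)).
apply: (ordering_modp (subalgM HB Ba Bvv) (subalgM HB Bu Bv) _ Puv).
have -> : a * (v * v) - u * v = (a * v - u) * v by ring.
exact: primeMr.
Qed.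

Lemma ext_ordering_supp x : supp ext_ordering x <-> p x.
Proof.
have [_ Padd Pmul _ _] := HP.
split=> [[[u1 [v1 [Bu1 Bv1 pv1 pxu1 Pu1]]] [u2 [v2 [Bu2 Bv2 pv2 pxu2 Pu2]]]] | px].
  (* X + Y lies in p and X, Y lie in P, hence X lies in supp P. *)
  pose X := u1 * v1 * (v2 * v2); pose Y := u2 * v2 * (v1 * v1).
  have BM := subalgM HB.
  have BX : B X := BM _ _ (BM _ _ Bu1 Bv1) (BM _ _ Bv2 Bv2).
  have BY : B Y := BM _ _ (BM _ _ Bu2 Bv2) (BM _ _ Bv1 Bv1).
  have PX : P X := Pmul _ _ Pu1 (ordering_sqr Bv2).
  have PY : P Y := Pmul _ _ Pu2 (ordering_sqr Bv1).
  have pXY : p (X + Y).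
    have -> : X + Y = - (v1 * v2) * ((x * v1 - u1) * v2 + (- x * v2 - u2) * v1).
      by rewrite /X /Y; ring.
    by apply/(primeMl Hp)/(primeD Hp); apply: (primeMr Hp).
  have /(suppP BX) : supp P X.
    split=> //; have -> : - X = Y + - (X + Y) by ring.
    by apply: Padd => //; case: (suppP (subalgD HB BX BY)) => _ /(_ pXY) [].
  case/(primeM_or Hp) => [/(primeM_or Hp) [pu1 | //] | /(primeM_or Hp) []//].
  have : p (x * v1) by rewrite -(subrK u1 (x * v1)); exact: primeD.
  by case/(primeM_or Hp).
have B0 := subalg0 HB; have B1 := subalg1 HB.
have P0 : P (0 * 1) by rewrite mul0r; exact: ordering_prime (prime0 Hp).
split; exists 0, 1; split=> //; rewrite ?mulr1 ?subr0 //; try exact: prime1 Hp.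
exact: (primeN Hp px).
Qed.

Hypothesis qfB : quot_in_qf B p.

Lemma ext_ordering_is_ordering : ordering_in (@full _ A) ext_ordering.
Proof.
have [_ Padd Pmul Ptot _] := HP.
split=> //.
- move=> a1 a2 [u1 [v1 [Bu1 Bv1 pv1 pau1 Pu1]]] [u2 [v2 [Bu2 Bv2 pv2 pau2 Pu2]]].
  exists (u1 * v2 + u2 * v1), (v1 * v2); split.
  + by apply: (subalgD HB); apply: (subalgM HB).
  + exact: (subalgM HB).
  + exact: (primeM_notin Hp).
  + have -> : (a1 + a2) * (v1 * v2) - (u1 * v2 + u2 * v1)
        = (a1 * v1 - u1) * v2 + (a2 * v2 - u2) * v1 by ring.
    by apply: (primeD Hp); apply: (primeMr Hp).
  + have -> : (u1 * v2 + u2 * v1) * (v1 * v2)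
        = u1 * v1 * (v2 * v2) + u2 * v2 * (v1 * v1) by ring.
    exact: Padd (Pmul _ _ Pu1 (ordering_sqr Bv2)) (Pmul _ _ Pu2 (ordering_sqr Bv1)).
- move=> a1 a2 [u1 [v1 [Bu1 Bv1 pv1 pau1 Pu1]]] [u2 [v2 [Bu2 Bv2 pv2 pau2 Pu2]]].
  exists (u1 * u2), (v1 * v2); split.
  + exact: (subalgM HB).
  + exact: (subalgM HB).
  + exact: (primeM_notin Hp).
  + have -> : a1 * a2 * (v1 * v2) - u1 * u2
        = (a1 * v1 - u1) * (a2 * v2) + (a2 * v2 - u2) * u1 by ring.
    by apply: (primeD Hp); apply: (primeMr Hp).
  + have -> : u1 * u2 * (v1 * v2) = u1 * v1 * (u2 * v2) by ring.
    exact: Pmul.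
- move=> a _; have [u [v [Bu Bv pv pau]]] := qfB a.
  case: (Ptot (u * v) (subalgM HB Bu Bv)) => Puv; [left | right].
    by exists u, v.
  exists (- u), v; split=> //.
  + exact: (subalgN HB).
  + have -> : - a * v - - u = - (a * v - u) by ring.
    exact: (primeN Hp).
  + by rewrite mulNr.
- suff -> : supp ext_ordering = p by [].
  by apply/predeqP; exact: ext_ordering_supp.
Qed.

Lemma ext_ordering_ge (T : A -> Prop) :
  preordering_in (@full _ A) T -> (fun x => T x /\ B x) `<=` P ->
  has_annihilator_in B p -> T `<=` ext_ordering.
Proof.
move=> [_ _ Tmul Tsq] TP [e [Be pe ann]] t Tt.
have [u [v [Bu Bv pv ptu]]] := qfB t; exists u, v; split=> //.
have Bee := subalgM HB Be Be.
apply: (ordering_cancel (subalgM HB Bu Bv) Bee (primeM_notin Hp pe pe) (ordering_sqr Be)).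
apply: TP; split; last by do 2!apply: (subalgM HB).
(* Multiplying by e^2 kills the error term t v - u, which lies in p. *)
have -> : u * v * (e * e) = t * (v * e) ^+ 2 - (t * v - u) * e * (v * e) by ring.
by rewrite (ann _ ptu) mul0r subr0; apply: Tmul; [| apply: Tsq].
Qed.

End ExtOrdering.
End OrderingExtension.

Section FinitelyManyMinimalPrimes.
Variables (K : fieldType) (A : comAlgType K) (I : finType) (ps : I -> A -> Prop).
Local Notation mp p := (minimal_prime_in (@full _ A) p).
Hypothesis red : reduced A.
Hypothesis ps_min : forall p, mp p -> exists i, forall x, p x <-> ps i x.

Lemma cap_minimal_primes0 y : (forall i, mp (ps i) -> ps i y) -> y = 0.
Proof.
move=> psy; apply: reduced_cap_minimal_primes => // p mpp.
have [i pi] := ps_min mpp.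
have {}pi : p = ps i by apply/predeqP.
by subst p; apply: psy.
Qed.

Lemma minimal_prime_annihilator i :
  mp (ps i) -> exists e, ~ ps i e /\ forall x, ps i x -> x * e = 0.
Proof.
move=> mpi; have [pi_prime pi_min] := mpi.
(* If p_j is contained in p_i, they are equal by minimality of p_i. *)
have /choice [g g_out] : forall j, exists gj, ~ ps i gj /\ (~ ps j `<=` ps i -> ps j gj).
  move=> j.
  have [pjpi | /existsNP [z /not_implyP [pjz piz]]] := pselect (ps j `<=` ps i).
    by exists 1; split; [exact: prime1 pi_prime | move/(_ pjpi)].
  by exists z.
exists (\prod_j g j); split.
  have := prime_in_prod (index_enum I) (F := g) (@full_subalg _ A) pi_prime.
  by case=> // j; split=> //; case: (g_out j).
move=> x pix; apply: cap_minimal_primes0 => j mpj.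
have [pj_prime _] := mpj.
have [pjpi | /(g_out j).2 pjg] := pselect (ps j `<=` ps i).
  by apply: (primeMr pj_prime); apply: pi_min.
by rewrite (bigD1 j) //= mulrCA; apply: (primeMr pj_prime).
Qed.

Lemma minimal_prime_contract_sub (B q : A -> Prop) :
  is_subalg B -> prime_in B q ->
  exists i, mp (ps i) /\ forall x, B x -> ps i x -> q x.
Proof.
move=> HB q_prime; apply: contrapT => /forallNP q_out.
(* Otherwise some product of f_j in (B ∩ p_j) \ q lies in every minimal
   prime, hence is 0, which lies in q. *)
have /choice [f f_out] : forall j, exists fj, [/\ B fj, ~ q fj & mp (ps j) -> ps j fj].
  move=> j; have [mpj | not_mpj] := pselect (mp (ps j)); last first.
    by exists 1; split=> //; [exact: subalg1 | case: q_prime].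
  have /existsNP [x /not_implyP [Bx /not_implyP [pjx qx]]] :
    ~ (forall x, B x -> ps j x -> q x) by move=> pjq; apply: (q_out j).
  by exists x.
have f_in j : B (f j) /\ ~ q (f j) by case: (f_out j).
have [_ []] := prime_in_prod (index_enum I) HB q_prime f_in.
have -> : \prod_j f j = 0.
  apply: cap_minimal_primes0 => j mpj; rewrite (bigD1 j) //=.
  by apply: (primeMr mpj.1); case: (f_out j) => _ _; apply.
by case: q_prime => -[].
Qed.

Lemma minimal_prime_contract (B q : A -> Prop) :
  is_subalg B -> minimal_prime_in B q ->
  exists i, mp (ps i) /\ forall x, B x -> q x <-> ps i x.
Proof.
move=> HB [q_prime q_min].
have [i [mpi piq]] := minimal_prime_contract_sub HB q_prime.
exists i; split=> // x Bx; split=> [qx | ]; last exact: piq.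
have q_sub := q_min _ (prime_in_contract HB mpi.1).
by case: (q_sub _ x qx) => // y [By piy]; apply: piq.
Qed.

Lemma exists_adapted_seq :
  (forall p, mp p -> qf_quot_fg p) ->
  exists L : seq A, forall s, {subset L <= s} -> forall i, mp (ps i) ->
    has_annihilator_in (gen_subalg s) (ps i) /\ quot_in_qf (gen_subalg s) (ps i).
Proof.
move=> ps_qf.
have /choice [l adapted] : forall i, exists l : seq A, mp (ps i) ->
    has_annihilator_in (gen_subalg l) (ps i) /\ quot_in_qf (gen_subalg l) (ps i).
  move=> i; have [mpi | not_mpi] := pselect (mp (ps i)); last by exists [::].
  have [e [pe ann]] := minimal_prime_annihilator mpi.
  have [c qfc] := qf_quot_fg_quot_in_qf mpi.1 (ps_qf _ mpi).
  exists (e :: c) => _; split.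
    by exists e; split=> //; apply: gen_subalg_mem; rewrite mem_head.
  by apply: quot_in_qf_sub qfc; apply: gen_subalg_sub => y cy; rewrite inE cy orbT.
exists (flatten [seq l i | i <- enum I]) => s Ls i mpi.
have /gen_subalg_sub li_s : {subset l i <= s}.
  by move=> y liy; apply/Ls/flatten_mapP; exists i; rewrite ?mem_enum.
have [ann qf] := adapted i mpi.
by split; [exact: has_annihilator_in_sub ann | exact: quot_in_qf_sub qf].
Qed.

Variable T : A -> Prop.
Hypotheses (HT : preordering_in (@full _ A) T) (HAA : almost_archimedean_in (@full _ A) T).

Lemma almost_archimedean_subalg B : is_subalg B ->
  (forall i, mp (ps i) -> has_annihilator_in B (ps i) /\ quot_in_qf B (ps i)) ->
  almost_archimedean_in B T.
Proof.
move=> HB adapted P HP TP /(minimal_prime_contract HB) [i [mpi suppP]].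
have [ann qf] := adapted i mpi.
have P'_ord := ext_ordering_is_ordering HB mpi.1 HP suppP qf.
have P'_min : mp (supp (ext_ordering B (ps i) P)).
  suff -> : supp (ext_ordering B (ps i) P) = ps i by [].
  by apply/predeqP; exact: ext_ordering_supp HB mpi.1 HP suppP.
have P'_ge := ext_ordering_ge HB mpi.1 HP suppP qf HT TP ann.
have P'_arch := HAA P'_ord (fun x Tx => P'_ge x Tx.1) P'_min.
move=> b Bb; have [N P'Nb] := P'_arch b Logic.I.
exists N; apply: (ext_ordering_restrict HB mpi.1 HP suppP _ P'Nb).
exact: (subalgB HB (subalg_nat HB N) Bb).
Qed.

End FinitelyManyMinimalPrimes.

Theorem lemma4p7 (R : realType) (K : fieldType) (iota : {rmorphism K -> R})
    (A : comAlgType K) (T : A -> Prop) :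
  preordering_in (@full _ A) T ->
  ff_alg A ->
  almost_archimedean_in (@full _ A) T ->
  reduced A ->
  let good (B : A -> Prop) := fg_subalg B /\ almost_archimedean_in B T in
  (forall s : seq A, exists B, good B /\ (forall x, x \in s -> B x)) /\
  (forall B1 B2, good B1 -> good B2 ->
     exists B3, [/\ good B3, subset_of B1 B3 & subset_of B2 B3]).
Proof.
move=> HT [[n [ps ps_min]] ps_qf] HAA red good.
have [L adapted] := exists_adapted_seq red ps_min ps_qf.
have good_L s : good (gen_subalg (s ++ L)).
  split; first by exists (s ++ L).
  apply: (almost_archimedean_subalg red ps_min HT HAA (gen_subalgP (s ++ L))).
  by apply: adapted => x Lx; rewrite mem_cat Lx orbT.
split=> [s | B1 B2 [[s1 B1E] _] [[s2 B2E] _]].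
  exists (gen_subalg (s ++ L)); split=> // x sx.
  by apply: gen_subalg_mem; rewrite mem_cat sx.
exists (gen_subalg ((s1 ++ s2) ++ L)); split=> // x.
- by move/B1E; apply: gen_subalg_sub => y s1y; rewrite !mem_cat s1y.
- by move/B2E; apply: gen_subalg_sub => y s2y; rewrite !mem_cat s2y orbT.
Qed.
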